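(* Let $C\subseteq\mathbb{R}^a$ be a polyhedral convex cone and let $\mathcal{Y}_{out}$ be the set of nonzero vertices of the polytope $C\cap B_1$. Let $\mathcal{Y}_{in}\subseteq C$ be a finite nonempty set of vectors with $\|r\|=1$ for all $r\in\mathcal{Y}_{in}$, and let $\delta>0$. Suppose that for every $d\in\mathcal{Y}_{out}$ there exists $r\in\mathcal{Y}_{in}$ with $\|d-r\|\le\delta$. Then $$d_H\big(C\cap B_1,\ \operatorname{cone}\mathcal{Y}_{in}\cap B_1\big)\le\delta.$$
   Context: $\|\cdot\|$ denotes the $\ell_1$ norm and $B_1=\{y\in\mathbb{R}^a:\|y\|\le1\}$. $\operatorname{cone}\mathcal{Y}$ is the convex conic hull of $\mathcal{Y}$. The Hausdorff distance is $d_H(X,Y)=\max\{\sup_{x\in X}\inf_{y\in Y}\|x-y\|,\sup_{y\in Y}\inf_{x\in X}\|x-y\|\}$. *)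

From mathcomp Require Import all_boot all_order all_algebra.
From mathcomp Require Import boolp classical_sets reals.
Set Implicit Arguments. Unset Strict Implicit. Unset Printing Implicit Defensive.
Import Order.TTheory GRing.Theory Num.Theory.
Local Open Scope ring_scope.
Local Open Scope classical_set_scope.

Section Defs.
Variables (R : realType) (a : nat).
Notation vec := 'rV[R]_a.

Definition norm1 (x : vec) : R := \sum_(i < a) `|x 0 i|.

Definition B1 : set vec := [set x | norm1 x <= 1].

Definition polyhedral_cone (C : set vec) : Prop :=
  exists (m : nat) (A : 'M[R]_(m, a)),
    C = [set x | forall i : 'I_m, (A *m x^T) i 0 <= 0].

Definition extreme_point (S : set vec) (x : vec) : Prop :=
  S x /\ forall (y z : vec) (t : R), S y -> S z -> 0 < t -> t < 1 ->
    x = t *: y + (1 - t) *: z -> y = x /\ z = x.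

Definition cone_hull (Y : seq vec) : set vec :=
  [set x | exists lam : 'I_(size Y) -> R,
     (forall i, 0 <= lam i) /\ x = \sum_(i < size Y) lam i *: Y`_i].

Definition dist_set (x : vec) (Y : set vec) : R :=
  inf [set norm1 (x - y) | y in Y].

Definition hausdorff (X Y : set vec) : R :=
  Num.max (sup [set dist_set x Y | x in X]) (sup [set dist_set y X | y in Y]).
End Defs.

From mathcomp Require Import all_boot all_order all_algebra.
From mathcomp Require Import boolp classical_sets reals.
From mathcomp Require Import ring lra.
Set Implicit Arguments. Unset Strict Implicit. Unset Printing Implicit Defensive.
Import Order.TTheory GRing.Theory Num.Theory.
Local Open Scope ring_scope.
Local Open Scope classical_set_scope.

(* The l1 ball is cut out by the 2^a linear inequalities sum_j +-x_j <= 1, so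
   C `&` B1 is a bounded polyhedron, and every point of it is a convex
   combination of its vertices (induction on the number of non-tight
   constraints: a non-vertex can be pushed both ways along a direction that
   keeps the tight constraints tight, until a new constraint becomes tight).
   Replacing each nonzero vertex by a delta-close element of Yin and the zero
   vertex by 0 yields, by convexity of the norm, a point of cone Yin `&` B1
   within delta.  Conversely cone Yin is contained in C, so every point of
   cone Yin `&` B1 lies in C `&` B1 itself. *)

Section Geometry.
Variables (R : realType) (a : nat).
Notation vec := 'rV[R]_a.

Definition lin_form (g : 'I_a -> R) (x : vec) : R := \sum_j g j * x 0 j.

Lemma lin_formD g (x y : vec) : lin_form g (x + y) = lin_form g x + lin_form g y.
Proof. by rewrite /lin_form -big_split; apply: eq_bigr => j _; rewrite mxE mulrDr. Qed.

Lemma lin_formZ g c (x : vec) : lin_form g (c *: x) = c * lin_form g x.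
Proof. by rewrite /lin_form mulr_sumr; apply: eq_bigr => j _; rewrite mxE mulrCA. Qed.

Lemma lin_form0 g : lin_form g 0 = 0.
Proof. by rewrite /lin_form big1 // => j _; rewrite mxE mulr0. Qed.

Lemma lin_formN g (x : vec) : lin_form g (- x) = - lin_form g x.
Proof. by rewrite -scaleN1r lin_formZ mulN1r. Qed.

Lemma norm1_ge0 (x : vec) : 0 <= norm1 x.
Proof. exact: sumr_ge0. Qed.

Lemma norm1D (x y : vec) : norm1 (x + y) <= norm1 x + norm1 y.
Proof. by rewrite /norm1 -big_split; apply: ler_sum => j _; rewrite mxE ler_normD. Qed.

Lemma norm1Z c (x : vec) : norm1 (c *: x) = `|c| * norm1 x.
Proof. by rewrite /norm1 mulr_sumr; apply: eq_bigr => j _; rewrite mxE normrM. Qed.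

Lemma norm1N (x : vec) : norm1 (- x) = norm1 x.
Proof. by rewrite -scaleN1r norm1Z normrN1 mul1r. Qed.

Lemma norm1_0 : norm1 (0 : vec) = 0.
Proof. by rewrite -(scale0r 0) norm1Z normr0 mul0r. Qed.

Lemma norm1_eq0 (x : vec) : norm1 x = 0 -> x = 0.
Proof.
move=> x0; apply/rowP => j; rewrite mxE; apply/eqP/normr0P.
exact: (psumr_eq0P (fun j _ => normr_ge0 (x 0 j)) x0).
Qed.

Lemma norm1_sum_le (l : seq (R * vec)) (w : R * vec -> vec) :
  (forall p, p \in l -> 0 <= p.1) ->
  norm1 (\sum_(p <- l) p.1 *: w p) <= \sum_(p <- l) p.1 * norm1 (w p).
Proof.
move=> l_ge0; rewrite big_seq [leRHS]big_seq.
apply: (big_ind2 (fun u r => norm1 u <= r)) => [|u r v s ur vs|p p_in].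
- by rewrite norm1_0.
- exact: le_trans (norm1D u v) (lerD ur vs).
- by rewrite norm1Z ger0_norm ?l_ge0.
Qed.

Lemma dist_set_le (x y : vec) (Y : set vec) : Y y -> dist_set x Y <= norm1 (x - y).
Proof.
move=> Yy; apply: ge_inf; last by exists y.
by exists 0 => _ [z _ <-]; exact: norm1_ge0.
Qed.

Lemma hausdorff_le (X Y : set vec) (delta : R) : X !=set0 -> Y !=set0 ->
  (forall x, X x -> exists2 y, Y y & norm1 (x - y) <= delta) ->
  (forall y, Y y -> exists2 x, X x & norm1 (y - x) <= delta) ->
  hausdorff X Y <= delta.
Proof.
move=> [x0 Xx0] [y0 Yy0] nearXY nearYX; rewrite /hausdorff ge_max.
apply/andP; split; apply: ge_sup.
- by exists (dist_set x0 Y), x0.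
- by move=> _ [x /nearXY[y Yy xy] <-]; exact: le_trans (dist_set_le x Yy) xy.
- by exists (dist_set y0 X), y0.
- by move=> _ [y /nearYX[x Xx yx] <-]; exact: le_trans (dist_set_le y Xx) yx.
Qed.

Definition extreme_decomposition (S : set vec) (x : vec) :=
  exists l : seq (R * vec),
    (forall p, p \in l -> 0 <= p.1 /\ extreme_point S p.2) /\
    \sum_(p <- l) p.1 = 1 /\ x = \sum_(p <- l) p.1 *: p.2.

Lemma extreme_decomposition_convex (S : set vec) (y z : vec) (t : R) :
  0 <= t <= 1 -> extreme_decomposition S y -> extreme_decomposition S z ->
  extreme_decomposition S (t *: y + (1 - t) *: z).
Proof.
move=> /andP[t_ge0 t_le1] [ly [ly_ext [ly1 ->]]] [lz [lz_ext [lz1 ->]]].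
pose scale c (p : R * vec) := (c * p.1, p.2).
exists (map (scale t) ly ++ map (scale (1 - t)) lz); split; [|split].
- move=> p; rewrite mem_cat => /orP[] /mapP[q q_in ->] /=.
    by have [q_ge0 q_ext] := ly_ext q q_in; rewrite mulr_ge0.
  by have [q_ge0 q_ext] := lz_ext q q_in; rewrite mulr_ge0 ?subr_ge0.
- by rewrite big_cat !big_map /= -!mulr_sumr ly1 lz1 !mulr1 addrC subrK.
- rewrite big_cat !big_map !scaler_sumr.
  by congr (_ + _); apply: eq_bigr => p _; rewrite scalerA.
Qed.

Section BoundedPolyhedron.
Variables (I : finType) (g : I -> 'I_a -> R) (h : I -> R).

Definition polyhedron : set vec := [set x | forall i, lin_form (g i) x <= h i].

Definition slack_count (x : vec) : nat := #|[set i | lin_form (g i) x < h i]%SET|.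

Lemma not_extreme_tight_direction x : polyhedron x ->
  ~ extreme_point polyhedron x ->
  exists2 v : vec, v != 0 & forall i, lin_form (g i) x = h i -> lin_form (g i) v = 0.
Proof.
move=> Px not_ext.
have [y [z [t [Py [Pz [t_gt0 [t_lt1 [xE yzx]]]]]]]] : exists y z t,
    polyhedron y /\ polyhedron z /\ 0 < t /\ t < 1 /\
    x = t *: y + (1 - t) *: z /\ ~ (y = x /\ z = x).
  apply: contrapT => no_split; apply: not_ext; split=> // y z t Py Pz t0 t1 xE.
  by apply: contrapT => yzx; apply: no_split; exists y, z, t.
exists (y - z).
  rewrite subr_eq0; apply/eqP => yz; apply: yzx; rewrite -yz in xE *.
  by rewrite xE -scalerDl addrC subrK scale1r.
move=> i xi; rewrite lin_formD lin_formN.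
have := Py i; have := Pz i; move: xi; rewrite xE lin_formD !lin_formZ; nra.
Qed.

Hypothesis bounded : forall x, polyhedron x -> norm1 x <= 1.

Lemma polyhedron_ray_exits x v : polyhedron x -> v != 0 ->
  exists i, 0 < lin_form (g i) v.
Proof.
move=> Px v0; apply: contrapT => /forallNP v_le0.
have {}v_le0 i : lin_form (g i) v <= 0 by rewrite leNgt; apply/negP/v_le0.
have nv : 0 < norm1 v.
  by rewrite lt_def norm1_ge0 andbT; apply: contra v0 => /eqP/norm1_eq0->.
(* Otherwise the whole ray x + R_+ v stays inside, e.g. at norm >= 3 - 1. *)
pose s := 3 / norm1 v.
have s_ge0 : 0 <= s by rewrite divr_ge0 // ltW.
have Pxs : polyhedron (x + s *: v).
  by move=> i; rewrite lin_formD lin_formZ; have := Px i; have := v_le0 i; nra.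
have : norm1 (s *: v) <= norm1 (x + s *: v) + norm1 (- x).
  have sv : s *: v = (x + s *: v) + - x by rewrite addrC addKr.
  by rewrite {1}sv; exact: norm1D.
rewrite norm1N norm1Z ger0_norm // mulfVK ?gt_eqF //.
by have := bounded Px; have := bounded Pxs; lra.
Qed.

Lemma polyhedron_step_to_face x v : polyhedron x -> v != 0 ->
  (forall i, lin_form (g i) x = h i -> lin_form (g i) v = 0) ->
  exists2 s, 0 < s &
    polyhedron (x + s *: v) /\ (slack_count (x + s *: v) < slack_count x)%N.
Proof.
move=> Px v0 tight; have [i1 v_i1] := polyhedron_ray_exits Px v0.
(* Step to the first constraint hit along v; F i is where constraint i is hit. *)
pose F i := (h i - lin_form (g i) x) / lin_form (g i) v.
have [i0 v_i0 F_min] := arg_minP F (P := [pred i | 0 < lin_form (g i) v]) v_i1.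
have /= {}v_i0 : 0 < lin_form (g i0) v := v_i0.
have slack_i0 : lin_form (g i0) x < h i0.
  by rewrite lt_neqAle Px andbT; apply: contraTneq v_i0 => /tight ->; rewrite ltxx.
have F_gt0 : 0 < F i0 by rewrite divr_gt0 // subr_gt0.
have F_tight : lin_form (g i0) x + F i0 * lin_form (g i0) v = h i0.
  by rewrite mulfVK ?gt_eqF // addrC subrK.
exists (F i0) => //; split.
  move=> i; rewrite lin_formD lin_formZ.
  have [v_i|] := ltP 0 (lin_form (g i) v); last by have := Px i; nra.
  by have := F_min i v_i; rewrite [F i]/F ler_pdivlMr //; lra.
apply: proper_card; apply/properP; split.
  apply/fintype.subsetP => i; rewrite !inE lin_formD lin_formZ => lt_i.
  rewrite lt_neqAle Px andbT; apply: contraTneq lt_i => /[dup] /tight -> ->.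
  by rewrite mulr0 addr0 ltxx.
by exists i0; rewrite !inE // lin_formD lin_formZ F_tight ltxx.
Qed.

Theorem bounded_polyhedron_extreme_decomposition x :
  polyhedron x -> extreme_decomposition polyhedron x.
Proof.
have [n] := ubnP (slack_count x); elim: n x => // n IH x /ltnSE slack_le Px.
have [x_ext|not_ext] := pselect (extreme_point polyhedron x).
  exists [:: (1, x)]; split; last by rewrite !big_seq1 scale1r.
  by move=> p; rewrite inE => /eqP ->.
have [v v0 tight] := not_extreme_tight_direction Px not_ext.
have [s1 s1_gt0 [P1 slack1]] := polyhedron_step_to_face Px v0 tight.
have [s2 s2_gt0 [P2 slack2]] : exists2 s, 0 < s &
    polyhedron (x + s *: - v) /\ (slack_count (x + s *: - v) < slack_count x)%N.
  apply: polyhedron_step_to_face; rewrite ?oppr_eq0 // => i /tight.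
  by rewrite lin_formN => ->; rewrite oppr0.
pose t := s2 / (s1 + s2).
have s12_gt0 : 0 < s1 + s2 by rewrite addr_gt0.
have xE : x = t *: (x + s1 *: v) + (1 - t) *: (x + s2 *: - v).
  by apply/rowP => j; rewrite !mxE /t; field; rewrite gt_eqF.
rewrite xE; apply: extreme_decomposition_convex; last 2 first.
- exact: IH (leq_trans slack1 slack_le) P1.
- exact: IH (leq_trans slack2 slack_le) P2.
by rewrite /t divr_ge0 /= ?ler_pdivrMr ?mul1r ?lerDr ?ltW.
Qed.

End BoundedPolyhedron.

Lemma cone_hull0 (Y : seq vec) : cone_hull Y 0.
Proof. by exists (fun _ => 0); split=> //; rewrite big1 // => i _; rewrite scale0r. Qed.

Lemma cone_hullD (Y : seq vec) y z :
  cone_hull Y y -> cone_hull Y z -> cone_hull Y (y + z).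
Proof.
move=> [ly [ly_ge0 ->]] [lz [lz_ge0 ->]]; exists (fun i => ly i + lz i); split.
  by move=> i; rewrite addr_ge0.
by rewrite -big_split; apply: eq_bigr => i _; rewrite scalerDl.
Qed.

Lemma cone_hullZ (Y : seq vec) c y : 0 <= c -> cone_hull Y y -> cone_hull Y (c *: y).
Proof.
move=> c_ge0 [l [l_ge0 ->]]; exists (fun i => c * l i); split.
  by move=> i; rewrite mulr_ge0.
by rewrite scaler_sumr; apply: eq_bigr => i _; rewrite scalerA.
Qed.

Lemma mem_cone_hull (Y : seq vec) r : r \in Y -> cone_hull Y r.
Proof.
move=> rY; pose i0 := Ordinal (etrans (index_mem r Y) rY).
exists (fun i => (i == i0)%:R); split=> [i|]; first exact: ler0n.
rewrite (bigD1 i0) //= big1 ?addr0 => [|i /negbTE ->]; last by rewrite scale0r.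
by rewrite eqxx scale1r nth_index.
Qed.

Lemma cone_hull_sum (Y : seq vec) (l : seq (R * vec)) (w : R * vec -> vec) :
  (forall p, p \in l -> 0 <= p.1 /\ cone_hull Y (w p)) ->
  cone_hull Y (\sum_(p <- l) p.1 *: w p).
Proof.
move=> l_cone; rewrite big_seq; apply: big_ind => [||p p_in].
- exact: cone_hull0.
- exact: cone_hullD.
- by have [p_ge0 w_cone] := l_cone p p_in; exact: cone_hullZ.
Qed.

Lemma cone_hull_approx_of_extreme (S : set vec) (Y : seq vec) (delta : R) :
  (forall x, S x -> extreme_decomposition S x) ->
  (forall e, extreme_point S e ->
     exists2 r, (cone_hull Y `&` B1 (a:=a)) r & norm1 (e - r) <= delta) ->
  forall x, S x -> exists2 y, (cone_hull Y `&` B1 (a:=a)) y & norm1 (x - y) <= delta.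
Proof.
move=> decomp near_ext x Sx.
have /choice[f fP] : forall e, exists r, extreme_point S e ->
    (cone_hull Y `&` B1 (a:=a)) r /\ norm1 (e - r) <= delta.
  move=> e; have [/near_ext[r r_in er]|not_ext] := pselect (extreme_point S e).
    by exists r.
  by exists 0 => /not_ext.
have [l [l_ext [l1 xE]]] := decomp x Sx.
have l_ge0 p : p \in l -> 0 <= p.1 by move=> /l_ext[].
have f_near p : p \in l -> [/\ cone_hull Y (f p.2), norm1 (f p.2) <= 1
                           & norm1 (p.2 - f p.2) <= delta].
  by move=> /l_ext[_ /fP[[f_cone f_B1] f_near]].
exists (\sum_(p <- l) p.1 *: f p.2); first split.
- by apply: cone_hull_sum => p p_in; have [? ? ?] := f_near p p_in; split; rewrite ?l_ge0.
- rewrite /B1 /=; apply: le_trans (norm1_sum_le _ l_ge0) _.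
  rewrite -l1 big_seq [leRHS]big_seq; apply: ler_sum => p p_in.
  by have [_ f_B1 _] := f_near p p_in; rewrite ler_piMr ?l_ge0.
- have -> : x - \sum_(p <- l) p.1 *: f p.2 = \sum_(p <- l) p.1 *: (p.2 - f p.2).
    by rewrite {1}xE -sumrB; apply: eq_bigr => p _; rewrite scalerBr.
  apply: le_trans (norm1_sum_le (fun p => p.2 - f p.2) l_ge0) _.
  rewrite -[leRHS]mul1r -l1 mulr_suml big_seq [leRHS]big_seq.
  by apply: ler_sum => p p_in; have [_ _ f_near_p] := f_near p p_in; rewrite ler_wpM2l ?l_ge0.
Qed.

Section PolyhedralCone.
Variables (m : nat) (A : 'M[R]_(m, a)).

(* The sign patterns [s] index the inequalities cutting out the l1 ball. *)
Definition cone_ball_form (i : 'I_m + {ffun 'I_a -> bool}) : 'I_a -> R :=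
  match i with inl k => fun j => A k j | inr s => fun j => if s j then 1 else -1 end.

Definition cone_ball_bound (i : 'I_m + {ffun 'I_a -> bool}) : R :=
  if i is inr _ then 1 else 0.

Lemma mulmx_tr_lin_form k (x : vec) : (A *m x^T) k 0 = lin_form (fun j => A k j) x.
Proof. by rewrite !mxE; apply: eq_bigr => j _; rewrite mxE. Qed.

Lemma polyhedral_cone_ballE :
  [set x | forall i, (A *m x^T) i 0 <= 0] `&` B1 (a:=a)
  = polyhedron cone_ball_form cone_ball_bound.
Proof.
apply/seteqP; split=> x /=.
  move=> [x_cone x_B1] [k|s] /=; first by rewrite -mulmx_tr_lin_form.
  apply: le_trans x_B1; apply: ler_sum => j _.
  by case: (s j); rewrite ?mul1r ?mulN1r ?ler_norm // -normrN ler_norm.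
move=> Px; split=> [k|]; first by rewrite mulmx_tr_lin_form; exact: (Px (inl k)).
have := Px (inr [ffun j => 0 <= x 0 j]); rewrite /B1 /=.
congr (_ <= _); apply: eq_bigr => j _; rewrite ffunE.
case: ifP => x_j; first by rewrite mul1r ger0_norm.
by rewrite mulN1r ltr0_norm // ltNge x_j.
Qed.

Lemma cone_hull_sub_polyhedral (Y : seq vec) :
  (forall r, r \in Y -> [set x | forall i, (A *m x^T) i 0 <= 0] r) ->
  cone_hull Y `<=` [set x | forall i, (A *m x^T) i 0 <= 0].
Proof.
move=> Y_cone _ [lam [lam_ge0 ->]] k /=; rewrite mulmx_tr_lin_form.
apply: (big_ind (fun x => lin_form (fun j => A k j) x <= 0)) => [|x y x_le0 y_le0|i _].
- by rewrite lin_form0.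
- by rewrite lin_formD; lra.
- rewrite lin_formZ mulr_ge0_le0 // -mulmx_tr_lin_form.
  exact: Y_cone (mem_nth 0 (ltn_ord i)) k.
Qed.

End PolyhedralCone.
End Geometry.

Theorem mainTheorem9 (R : realType) (a : nat) (C : set 'rV[R]_a)
  (Yin : seq 'rV[R]_a) (delta : R) :
  polyhedral_cone C ->
  Yin != [::] ->
  (forall r, r \in Yin -> C r /\ norm1 r = 1) ->
  0 < delta ->
  (forall d, extreme_point (C `&` B1 (a:=a)) d -> d != 0 ->
     exists2 r, r \in Yin & norm1 (d - r) <= delta) ->
  hausdorff (C `&` B1 (a:=a)) (cone_hull Yin `&` B1 (a:=a)) <= delta.
Proof.
move=> [m [A CE]] _ Yin_prop delta_gt0 Yin_near.
have CB_poly := polyhedral_cone_ballE A; rewrite -CE in CB_poly.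
have Yin_sub_C : cone_hull Yin `<=` C.
  by rewrite CE; apply: cone_hull_sub_polyhedral => r /Yin_prop[]; rewrite CE.
have B1_0 : B1 (0 : 'rV[R]_a) by rewrite /B1 /= norm1_0.
apply: hausdorff_le.
- by exists 0; split=> //; apply: Yin_sub_C; exact: cone_hull0.
- by exists 0; split=> //; exact: cone_hull0.
- apply: cone_hull_approx_of_extreme => [x|e e_ext].
    rewrite CB_poly => Px; apply: bounded_polyhedron_extreme_decomposition => //.
    by move=> y; rewrite -CB_poly => -[].
  have [->|e0] := eqVneq e 0.
    by exists 0; [split=> //; exact: cone_hull0 | rewrite subr0 norm1_0 ltW].
  have [r r_in er] := Yin_near e e_ext e0; exists r => //.
  by split; [exact: mem_cone_hull | rewrite /B1 /= (proj2 (Yin_prop r r_in))].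
- move=> y [y_cone y_B1]; exists y; first by split=> //; exact: Yin_sub_C.
  by rewrite subrr norm1_0 ltW.
Qed.
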